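(* For every context $\Gamma$, variables $x,y$ and terms $A,M,B$: if $y\notin\mathrm{dom}\,\Gamma$ and $\Gamma,x:A\vdash M:B$, then $\Gamma,y:A\vdash M[x:=v\,y]:B[x:=v\,y]$.
   Context: Let $\mathcal V$ (the variables) be a type with decidable equality, equipped with functions $\mathrm{encode}:\mathcal V\to\mathbb N$ and $\mathrm{decode}:\mathbb N\to\mathcal V$ such that $\mathrm{encode}(\mathrm{decode}\,n)=n$ for all $n$. Let $\mathcal C$ (the constants) be any type. Terms $\Lambda$ are generated by: $c\,k$ ($k\in\mathcal C$), $v\,x$ ($x\in\mathcal V$), $\lambda[x:A]M$, $\Pi[x:A]B$ and $M\cdot N$; in $\lambda[x:A]M$ and $\Pi[x:A]B$ the name $x$ binds in $M$ (resp. $B$) but not in $A$. Terms are raw first-order syntax (not identified up to renaming of bound variables) and $\equiv$ denotes syntactic identity. The list of free variables is $\mathrm{fv}(c\,k)=[\,]$, $\mathrm{fv}(v\,x)=[x]$, $\mathrm{fv}(\lambda[x:A]M)=\mathrm{fv}\,A\mathbin{+\!\!+}(\mathrm{fv}\,M-x)$, $\mathrm{fv}(\Pi[x:A]B)=\mathrm{fv}\,A\mathbin{+\!\!+}(\mathrm{fv}\,B-x)$, $\mathrm{fv}(M\cdot N)=\mathrm{fv}\,M\mathbin{+\!\!+}\mathrm{fv}\,N$, where $\mathbin{+\!\!+}$ is list concatenation and $xs-x$ deletes every occurrence of $x$ from $xs$. Fix a function $\chi':\mathrm{List}\,\mathbb N\to\mathbb N$ with $\chi'(ns)\notin ns$ for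 every list $ns$, and put $X'(xs)=\mathrm{decode}(\chi'(\mathrm{map}\ \mathrm{encode}\ xs))$. A substitution is any function $\sigma:\mathcal V\to\Lambda$; $\iota=v$ is the identity substitution; $(\sigma,x:=N)(y)=N$ if $y=x$ and $\sigma\,y$ otherwise. For a substitution $\sigma$ and a list $xs$ of variables, $X(\sigma,xs)=X'(\text{concatenation of the lists }\mathrm{fv}(\sigma\,y)\text{ for }y\in xs)$. The action $M\bullet\sigma$ is defined by structural recursion: $c\,k\bullet\sigma=c\,k$; $v\,x\bullet\sigma=\sigma\,x$; $(M\cdot N)\bullet\sigma=(M\bullet\sigma)\cdot(N\bullet\sigma)$; $(\lambda[x:A]M)\bullet\sigma=\lambda[y:A\bullet\sigma](M\bullet(\sigma,x:=v\,y))$ with $y=X(\sigma,\mathrm{fv}\,M-x)$; $(\Pi[x:A]B)\bullet\sigma=\Pi[y:A\bullet\sigma](B\bullet(\sigma,x:=v\,y))$ with $y=X(\sigma,\mathrm{fv}\,B-x)$. Unary substitution is $M[x:=N]=M\bullet(\iota,x:=N)$. $\alpha$-conversion $\sim_\alpha$ is the inductively defined relation with rules: $c\,k\sim_\alpha c\,k$; $v\,x\sim_\alpha v\,x$; $M\cdot N\sim_\alpha M'\cdot N'$ if $M\sim_\alpha M'$ and $N\sim_\alpha N'$; $\lambda[x:A]M\sim_\alpha\lambda[x':A']M'$ if $A\sim_\alpha A'$ and there is a variable $y$ with $y\notin\mathrm{fv}\,M-x$, $y\notin\mathrm{fv}\,M'-x'$ and $M[x:=v\,y]\equiv M'[x':=v\,y]$;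 and the same rule with $\Pi$ in place of $\lambda$. $\beta$-contraction is $(\lambda[x:A]M)\cdot N\ \triangleright_\beta\ M[x:=N]$. One-step $\beta$-reduction $\to_\beta$ is its contextual closure, inductively: $M\to_\beta N$ if $M\triangleright_\beta N$; $\lambda[x:A]M\to_\beta\lambda[x:A]M'$ and $\Pi[x:A]M\to_\beta\Pi[x:A]M'$ if $M\to_\beta M'$; $\lambda[x:A]M\to_\beta\lambda[x:A']M$ and $\Pi[x:A]M\to_\beta\Pi[x:A']M$ if $A\to_\beta A'$; $M\cdot P\to_\beta N\cdot P$ and $P\cdot M\to_\beta P\cdot N$ if $M\to_\beta N$. $\beta$-conversion $\simeq_\beta$ is the equivalence (reflexive–symmetric–transitive) closure of $\sim_\alpha\cup\to_\beta$. Pure Type System: fix a binary relation $\mathcal A\subseteq\mathcal C\times\mathcal C$ (axioms) and a ternary relation $\mathcal R\subseteq\mathcal C\times\mathcal C\times\mathcal C$ (rules). A context is a finite list of pairs $(x,A)$ with $x\in\mathcal V$, $A\in\Lambda$; $\Gamma,x:A$ denotes the list $(x,A)::\Gamma$; $\mathrm{dom}\,\Gamma$ is the list of first components; $(x,A)\in\Gamma$ is list membership. The judgments $\Gamma\ \mathrm{ok}$ and $\Gamma\vdash M:A$ are defined mutually inductively by: (nil) $[\,]\ \mathrm{ok}$; (cons) if $\Gamma\ \mathrm{ok}$, $\Gamma\vdash A:c\,s$ and $x\notin\mathrm{dom}\,\Gamma$ then $\Gamma,x:A\ \mathrm{ok}$; (sort) if $\Gamma\ \mathrm{ok}$ and $\mathcal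 A\,s_1\,s_2$ then $\Gamma\vdash c\,s_1:c\,s_2$; (var) if $\Gamma\ \mathrm{ok}$ and $(x,A)\in\Gamma$ then $\Gamma\vdash v\,x:A$; (prod) if $\mathcal R\,s_1\,s_2\,s_3$, $\Gamma\vdash A:c\,s_1$ and for every $y\notin\mathrm{dom}\,\Gamma$, $\Gamma,y:A\vdash B[x:=v\,y]:c\,s_2$, then $\Gamma\vdash\Pi[x:A]B:c\,s_3$; (abs) if $\mathcal R\,s_1\,s_2\,s_3$, $\Gamma\vdash A:c\,s_1$, for every $z\notin\mathrm{dom}\,\Gamma$, $\Gamma,z:A\vdash B[y:=v\,z]:c\,s_2$, and for every $z\notin\mathrm{dom}\,\Gamma$, $\Gamma,z:A\vdash M[x:=v\,z]:B[y:=v\,z]$, then $\Gamma\vdash\lambda[x:A]M:\Pi[y:A]B$; (app) if $\Gamma\vdash M:\Pi[x:A]B$, $\Gamma\vdash N:A$ and $\Gamma\vdash B[x:=N]:c\,s$ for some $s$, then $\Gamma\vdash M\cdot N:B[x:=N]$; (conv) if $\Gamma\vdash M:A$, $A\simeq_\beta B$ and $\Gamma\vdash B:c\,s$ for some $s$, then $\Gamma\vdash M:B$. (The premises quantified over all fresh names in (prod) and (abs) are infinitely branching.) *)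

From Stdlib Require Import List Relations.
Import ListNotations.
Set Implicit Arguments.

Record VarType := {
  vT :> Type;
  veq_dec : forall x y : vT, {x = y} + {x <> y};
  encode : vT -> nat;
  decode : nat -> vT;
  encode_decode : forall n, encode (decode n) = n;
  chi' : list nat -> nat;
  chi'_fresh : forall ns, ~ In (chi' ns) ns
}.

Inductive term (V : VarType) (C : Type) : Type :=
| tc : C -> term V C
| tv : V -> term V C
| tlam : V -> term V C -> term V C -> term V C   (* lambda [x : A] M *)
| tpi : V -> term V C -> term V C -> term V C    (* Pi [x : A] B *)
| tapp : term V C -> term V C -> term V C.
Arguments tc {V C} _.
Arguments tv {V C} _.
Arguments tlam {V C} _ _ _.
Arguments tpi {V C} _ _ _.
Arguments tapp {V C} _ _.

Section Syntax.
Variable V : VarType.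
Variable C : Type.

Definition remove_var (xs : list V) (x : V) : list V :=
  filter (fun y => if veq_dec V y x then false else true) xs.

Fixpoint fv (M : term V C) : list V :=
  match M with
  | tc _ => []
  | tv x => [x]
  | tlam x A M => fv A ++ remove_var (fv M) x
  | tpi x A B => fv A ++ remove_var (fv B) x
  | tapp M N => fv M ++ fv N
  end.

Definition X' (xs : list V) : V := decode V (chi' V (map (encode V) xs)).

Definition X (sigma : V -> term V C) (xs : list V) : V :=
  X' (flat_map (fun y => fv (sigma y)) xs).

Definition upd (sigma : V -> term V C) (x : V) (N : term V C) : V -> term V C :=
  fun y => if veq_dec V y x then N else sigma y.

Fixpoint act (M : term V C) (sigma : V -> term V C) : term V C :=
  match M with
  | tc k => tc k
  | tv x => sigma x
  | tapp M N => tapp (act M sigma) (act N sigma)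
  | tlam x A M =>
      let y := X sigma (remove_var (fv M) x) in
      tlam y (act A sigma) (act M (upd sigma x (tv y)))
  | tpi x A B =>
      let y := X sigma (remove_var (fv B) x) in
      tpi y (act A sigma) (act B (upd sigma x (tv y)))
  end.

Definition iota : V -> term V C := fun x => tv x.

Definition subst1 (M : term V C) (x : V) (N : term V C) : term V C :=
  act M (upd iota x N).

Inductive alpha : term V C -> term V C -> Prop :=
| alpha_c : forall k, alpha (tc k) (tc k)
| alpha_v : forall x, alpha (tv x) (tv x)
| alpha_app : forall M N M' N', alpha M M' -> alpha N N' ->
    alpha (tapp M N) (tapp M' N')
| alpha_lam : forall x A M x' A' M' y, alpha A A' ->
    ~ In y (remove_var (fv M) x) -> ~ In y (remove_var (fv M') x') ->
    subst1 M x (tv y) = subst1 M' x' (tv y) ->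
    alpha (tlam x A M) (tlam x' A' M')
| alpha_pi : forall x A M x' A' M' y, alpha A A' ->
    ~ In y (remove_var (fv M) x) -> ~ In y (remove_var (fv M') x') ->
    subst1 M x (tv y) = subst1 M' x' (tv y) ->
    alpha (tpi x A M) (tpi x' A' M').

Inductive beta_contr : term V C -> term V C -> Prop :=
| beta_c : forall x A M N, beta_contr (tapp (tlam x A M) N) (subst1 M x N).

Inductive beta_step : term V C -> term V C -> Prop :=
| bs_contr : forall M N, beta_contr M N -> beta_step M N
| bs_lam_body : forall x A M M', beta_step M M' -> beta_step (tlam x A M) (tlam x A M')
| bs_pi_body : forall x A M M', beta_step M M' -> beta_step (tpi x A M) (tpi x A M')
| bs_lam_dom : forall x A A' M, beta_step A A' -> beta_step (tlam x A M) (tlam x A' M)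
| bs_pi_dom : forall x A A' M, beta_step A A' -> beta_step (tpi x A M) (tpi x A' M)
| bs_appl : forall M N P, beta_step M N -> beta_step (tapp M P) (tapp N P)
| bs_appr : forall M N P, beta_step M N -> beta_step (tapp P M) (tapp P N).

Definition beta_conv : term V C -> term V C -> Prop :=
  clos_refl_sym_trans (term V C) (fun M N => alpha M N \/ beta_step M N).

Definition context := list (V * term V C).
Definition dom (G : context) : list V := map fst G.

Variable Ax : C -> C -> Prop.
Variable Rl : C -> C -> C -> Prop.

Inductive wf : context -> Prop :=
| wf_nil : wf []
| wf_cons : forall G x A s, wf G -> typing G A (tc s) -> ~ In x (dom G) ->
    wf ((x, A) :: G)
with typing : context -> term V C -> term V C -> Prop :=
| ty_sort : forall G s1 s2, wf G -> Ax s1 s2 -> typing G (tc s1) (tc s2)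
| ty_var : forall G x A, wf G -> In (x, A) G -> typing G (tv x) A
| ty_prod : forall G x A B s1 s2 s3, Rl s1 s2 s3 -> typing G A (tc s1) ->
    (forall y, ~ In y (dom G) -> typing ((y, A) :: G) (subst1 B x (tv y)) (tc s2)) ->
    typing G (tpi x A B) (tc s3)
| ty_abs : forall G x y A M B s1 s2 s3, Rl s1 s2 s3 -> typing G A (tc s1) ->
    (forall z, ~ In z (dom G) -> typing ((z, A) :: G) (subst1 B y (tv z)) (tc s2)) ->
    (forall z, ~ In z (dom G) ->
       typing ((z, A) :: G) (subst1 M x (tv z)) (subst1 B y (tv z))) ->
    typing G (tlam x A M) (tpi y A B)
| ty_app : forall G M N x A B s, typing G M (tpi x A B) -> typing G N A ->
    typing G (subst1 B x N) (tc s) -> typing G (tapp M N) (subst1 B x N)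
| ty_conv : forall G M A B s, typing G M A -> beta_conv A B -> typing G B (tc s) ->
    typing G M B.

End Syntax.

(* Typing is equivariant under bijective renamings [r] of variables: by induction, a derivation
   of [G |- M : B] is mapped to one of [r G |- M·r : B·r], where [·r] is the substitution
   [x |-> v (r x)].  Bijectivity handles the premises of (prod) and (abs) quantified over all
   fresh names: the premise needed at a fresh [z] is the renaming of the one available at
   [r^-1 z].  Conversion survives because alpha- and beta-steps are stable under substitution.
   The transposition [(x y)] fixes every variable declared in [G], hence every free variable of
   [G], and turns the declaration of [x] into one of [y]; so it yields the theorem up to
   alpha-conversion of the subject and of the context, since substitution re-chooses all bound
   names.  It remains to show that typing is invariant under replacing the subject and the
   types in the context by terms with the same canonical form [act _ ι]. *)

From Stdlib Require Import List Relations.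
Import ListNotations.

(** * Substitution *)

Section Substitution.
Context {V : VarType} {C : Type}.
Local Notation tm := (term V C).
Local Notation ι := (iota V C).
Local Notation rem := (remove_var V).

Lemma in_remove_var (a x : V) (l : list V) : In a (rem l x) <-> In a l /\ a <> x.
Proof.
  unfold remove_var. rewrite filter_In.
  destruct (veq_dec V a x); intuition congruence.
Qed.

Lemma remove_var_app (l1 l2 : list V) x : rem (l1 ++ l2) x = rem l1 x ++ rem l2 x.
Proof. apply filter_app. Qed.

Lemma remove_var_cons (a x : V) l :
  rem (a :: l) x = if veq_dec V a x then rem l x else a :: rem l x.
Proof. unfold remove_var; simpl. destruct (veq_dec V a x); reflexivity. Qed.

Lemma remove_var_notin (l : list V) y : ~ In y l -> rem l y = l.
Proof.
  induction l as [|a l IH]; intros Hy; [reflexivity|].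
  rewrite remove_var_cons. destruct (veq_dec V a y) as [->|_].
  - exfalso. apply Hy. left. reflexivity.
  - f_equal. apply IH. intros H. apply Hy. right. exact H.
Qed.

Lemma X'_fresh (l : list V) : ~ In (X' V l) l.
Proof.
  intros H. apply (chi'_fresh V (map (encode V) l)).
  rewrite <- (encode_decode V (chi' V (map (encode V) l))).
  apply in_map, H.
Qed.

Definition fv_img (s : V -> tm) (l : list V) : list V := flat_map (fun w => fv (s w)) l.

Definition scomp (s t : V -> tm) : V -> tm := fun w => act (s w) t.

Lemma X_fresh (s : V -> tm) l : ~ In (X s l) (fv_img s l).
Proof. apply X'_fresh. Qed.

Lemma in_fv_img (s : V -> tm) l a : In a (fv_img s l) <-> exists w, In w l /\ In a (fv (s w)).
Proof. apply in_flat_map. Qed.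

Lemma fv_img_ext (s t : V -> tm) l : (forall w, In w l -> s w = t w) -> fv_img s l = fv_img t l.
Proof.
  induction l as [|a l IH]; intros H; [reflexivity|].
  unfold fv_img; simpl. rewrite H by (left; reflexivity). f_equal.
  apply IH. intros w Hw. apply H. right. exact Hw.
Qed.

Lemma X_ext (s t : V -> tm) l : (forall w, In w l -> s w = t w) -> X s l = X t l.
Proof. intros H. unfold X. f_equal. apply fv_img_ext, H. Qed.

Lemma fv_img_iota l : fv_img ι l = l.
Proof.
  induction l as [|a l IH]; [reflexivity|].
  unfold fv_img in *; simpl. f_equal. exact IH.
Qed.

Lemma X_iota_fresh l : ~ In (X ι l) l.
Proof. rewrite <- (fv_img_iota l) at 2. apply X_fresh. Qed.

Lemma upd_eq (s : V -> tm) x N : upd s x N x = N.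
Proof. unfold upd. destruct (veq_dec V x x); congruence. Qed.

Lemma upd_neq (s : V -> tm) x N w : w <> x -> upd s x N w = s w.
Proof. unfold upd. destruct (veq_dec V w x); congruence. Qed.

Lemma act_ext (M : tm) s t : (forall w, In w (fv M) -> s w = t w) -> act M s = act M t.
Proof.
  revert s t.
  induction M as [k|v|x A IHA M IHM|x A IHA M IHM|M IHM N IHN]; intros s t H; simpl in *.
  all: [> reflexivity | apply H; left; reflexivity | | |
     f_equal; [apply IHM|apply IHN]; intros w Hw; apply H, in_or_app; auto].
  all: assert (Hrem : forall w, In w (rem (fv M) x) -> s w = t w)
         by (intros w Hw; apply H, in_or_app; auto).
  all: rewrite (X_ext s t _ Hrem); f_equal;
       [apply IHA; intros w Hw; apply H, in_or_app; auto|].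
  all: apply IHM; intros w Hw; unfold upd; destruct (veq_dec V w x); auto;
       apply Hrem, in_remove_var; auto.
Qed.

Lemma remove_var_fv_img_upd (s : V -> tm) x y l :
  ~ In y (fv_img s (rem l x)) -> rem (fv_img (upd s x (tv y)) l) y = fv_img s (rem l x).
Proof.
  induction l as [|a l IH]; intros Hy; [reflexivity|].
  change (fv_img ?t (a :: ?l)) with (fv (t a) ++ fv_img t l).
  rewrite remove_var_app. rewrite remove_var_cons in Hy |- *.
  destruct (veq_dec V a x) as [->|Hax].
  - rewrite upd_eq. change (fv (tv y)) with [y].
    rewrite remove_var_cons. destruct (veq_dec V y y) as [_|]; [|congruence].
    apply IH, Hy.
  - rewrite upd_neq by exact Hax.
    change (fv_img s (a :: rem l x)) with (fv (s a) ++ fv_img s (rem l x)) in Hy |- *.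
    rewrite remove_var_notin by (intro; apply Hy, in_or_app; auto).
    f_equal. apply IH. intro; apply Hy, in_or_app; auto.
Qed.

Lemma fv_act (M : tm) s : fv (act M s) = fv_img s (fv M).
Proof.
  revert s.
  induction M as [k|v|x A IHA M IHM|x A IHA M IHM|M IHM N IHN]; intros s; simpl.
  all: [> reflexivity | unfold fv_img; simpl; rewrite app_nil_r; reflexivity | | |
     rewrite IHM, IHN; symmetry; apply flat_map_app].
  all: rewrite IHA, IHM, remove_var_fv_img_upd by apply X_fresh;
       symmetry; apply flat_map_app.
Qed.

Lemma fv_img_fv_img (s t : V -> tm) l : fv_img t (fv_img s l) = fv_img (scomp s t) l.
Proof.
  induction l as [|a l IH]; [reflexivity|].
  unfold fv_img, scomp in *; simpl. rewrite flat_map_app, fv_act, IH. reflexivity.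
Qed.

Lemma X_fv_img (s t : V -> tm) l : X t (fv_img s l) = X (scomp s t) l.
Proof. unfold X. f_equal. apply fv_img_fv_img. Qed.

Lemma scomp_upd_fresh (s t : V -> tm) x y N l w :
  ~ In y (fv_img s (rem l x)) -> In w l ->
  scomp (upd s x (tv y)) (upd t y N) w = upd (scomp s t) x N w.
Proof.
  intros Hy Hw. unfold scomp. destruct (veq_dec V w x) as [->|Hwx].
  - rewrite !upd_eq. simpl. apply upd_eq.
  - rewrite !upd_neq by exact Hwx. apply act_ext. intros u Hu.
    apply upd_neq. intros ->. apply Hy, in_fv_img. exists w.
    split; [apply in_remove_var|]; auto.
Qed.

Lemma act_act (M : tm) s t : act (act M s) t = act M (scomp s t).
Proof.
  revert s t.
  induction M as [k|v|x A IHA M IHM|x A IHA M IHM|M IHM N IHN]; intros s t; simpl.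
  all: [> reflexivity | reflexivity | | | rewrite IHM, IHN; reflexivity].
  all: set (y := X s (rem (fv M) x)); pose proof (X_fresh s (rem (fv M) x)) as Hy;
       fold y in Hy.
  all: assert (Ey : X t (rem (fv (act M (upd s x (tv y)))) y) = X (scomp s t) (rem (fv M) x))
         by (rewrite fv_act, remove_var_fv_img_upd by exact Hy; apply X_fv_img).
  all: rewrite Ey, IHA, IHM; f_equal; apply act_ext; intros w Hw;
       apply (scomp_upd_fresh _ _ _ _ _ _ _ Hy Hw).
Qed.


Lemma act_upd_fresh (M : tm) s t x y N :
  ~ In y (fv_img s (rem (fv M) x)) ->
  act (act M (upd s x (tv y))) (upd t y N) = act M (upd (scomp s t) x N).
Proof.
  intros Hy. rewrite act_act. apply act_ext. intros w Hw.
  exact (scomp_upd_fresh _ _ _ _ _ _ _ Hy Hw).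
Qed.

Lemma act_subst1_fresh (M : tm) x y s N :
  ~ In y (rem (fv M) x) -> act (subst1 M x (tv y)) (upd s y N) = act M (upd s x N).
Proof. intros Hy. apply act_upd_fresh. rewrite fv_img_iota. exact Hy. Qed.

Lemma remove_var_fv_subst1 (M : tm) x y :
  ~ In y (rem (fv M) x) -> rem (fv (subst1 M x (tv y))) y = rem (fv M) x.
Proof.
  intros Hy. unfold subst1.
  rewrite fv_act, remove_var_fv_img_upd; rewrite fv_img_iota; [reflexivity | exact Hy].
Qed.

(** * Alpha-normal forms and conversion *)

(* As [act] renames every binder canonically, [act M ι] is a normal form for alpha-conversion;
   the suffix [nf] refers to it. *)

Lemma act_iota_act (P : tm) s : act (act P ι) s = act P s.
Proof. rewrite act_act. reflexivity. Qed.

Lemma fv_act_iota (P : tm) : fv (act P ι) = fv P.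
Proof. rewrite fv_act. apply fv_img_iota. Qed.

Lemma nf_eq_act {P Q : tm} : act P ι = act Q ι -> forall s, act P s = act Q s.
Proof. intros H s. rewrite <- (act_iota_act P), <- (act_iota_act Q), H. reflexivity. Qed.

Lemma nf_eq_fv {P Q : tm} : act P ι = act Q ι -> fv P = fv Q.
Proof. intros H. rewrite <- (fv_act_iota P), <- (fv_act_iota Q), H. reflexivity. Qed.

Lemma nf_eq_sort (M : tm) k : act M ι = tc k -> M = tc k.
Proof. destruct M; simpl; intros H; solve [exact H | discriminate]. Qed.

Lemma nf_eq_var (M : tm) x : act M ι = tv x -> M = tv x.
Proof. destruct M; simpl; intros H; solve [exact H | discriminate]. Qed.

Lemma subst1_var_nf (M : tm) x z : act (subst1 M x (tv z)) ι = subst1 M x (tv z).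
Proof.
  unfold subst1. rewrite act_act. apply act_ext. intros w _.
  unfold scomp, upd. destruct (veq_dec V w x); reflexivity.
Qed.

Lemma nf_eq_subst1 (B N N' : tm) x :
  act N' ι = act N ι -> act (subst1 B x N') ι = act (subst1 B x N) ι.
Proof.
  intros H. unfold subst1. rewrite !act_act. apply act_ext. intros w _.
  unfold scomp, upd. destruct (veq_dec V w x); [exact H | reflexivity].
Qed.

(* The hypotheses are the binder and body components of
   [act (tpi u A' B') ι = act (tpi x A B) ι] (or of the same equation for [tlam]). *)
Lemma binder_body_nf (B' B : tm) u x :
  X ι (rem (fv B') u) = X ι (rem (fv B) x) ->
  act B' (upd ι u (tv (X ι (rem (fv B') u)))) = act B (upd ι x (tv (X ι (rem (fv B) x)))) ->
  forall z, act (subst1 B' u (tv z)) ι = act (subst1 B x (tv z)) ι.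
Proof.
  intros Ey EB z. rewrite !subst1_var_nf.
  set (y' := X ι (rem (fv B') u)) in *. set (y := X ι (rem (fv B) x)) in *.
  transitivity (act (subst1 B' u (tv y')) (upd ι y' (tv z)));
    [symmetry; apply act_subst1_fresh, X_iota_fresh|].
  transitivity (act (subst1 B x (tv y)) (upd ι y (tv z)));
    [|apply act_subst1_fresh, X_iota_fresh].
  unfold subst1. rewrite EB, Ey. reflexivity.
Qed.

Lemma alpha_act {M N : tm} : alpha M N -> forall s, act M s = act N s.
Proof.
  induction 1 as [k | v | M N M' N' _ IHM _ IHN
                 | x A M x' A' M' y _ IHA Hy Hy' E | x A M x' A' M' y _ IHA Hy Hy' E];
    intros s; simpl.
  all: [> reflexivity | reflexivity | rewrite IHM, IHN; reflexivity | | ].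
  all: assert (Erem : rem (fv M) x = rem (fv M') x')
         by (rewrite <- (remove_var_fv_subst1 M x y), <- (remove_var_fv_subst1 M' x' y), E
               by assumption; reflexivity).
  all: rewrite Erem, IHA; f_equal;
       rewrite <- (act_subst1_fresh M x y), <- (act_subst1_fresh M' x' y), E
         by assumption; reflexivity.
Qed.

Lemma alpha_act_iota (M : tm) : alpha M (act M ι).
Proof.
  induction M as [k|v|x A IHA M IHM|x A IHA M IHM|M IHM N IHN]; simpl.
  all: [> constructor | constructor | | | constructor; assumption].
  all: set (y := X ι (rem (fv M) x)); pose proof (X_iota_fresh (rem (fv M) x)) as Hy.
  all: assert (Hy' : ~ In y (rem (fv (act M (upd ι x (tv y)))) y))
         by (rewrite in_remove_var; tauto).
  all: assert (E : subst1 M x (tv y) = subst1 (act M (upd ι x (tv y))) y (tv y))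
         by (unfold subst1; rewrite act_upd_fresh by (rewrite fv_img_iota; exact Hy);
             reflexivity).
  all: [> exact (alpha_lam x M y _ y IHA Hy Hy' E) | exact (alpha_pi x M y _ y IHA Hy Hy' E)].
Qed.

Lemma beta_conv_of_nf (P Q : tm) : act P ι = act Q ι -> beta_conv P Q.
Proof.
  intros H. unfold beta_conv.
  apply rst_trans with (act P ι); [apply rst_step; left; apply alpha_act_iota|].
  rewrite H. apply rst_sym, rst_step. left. apply alpha_act_iota.
Qed.

Lemma beta_conv_congr (f : tm -> tm) :
  (forall P Q, act P ι = act Q ι -> act (f P) ι = act (f Q) ι) ->
  (forall P Q, beta_step P Q -> beta_step (f P) (f Q)) ->
  forall P Q, beta_conv P Q -> beta_conv (f P) (f Q).
Proof.
  intros Hnf Hstep P Q H. unfold beta_conv in *.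
  induction H as [P Q [Ha|Hb] | P | P Q _ IH | P Q R _ IH1 _ IH2].
  - apply beta_conv_of_nf, Hnf, alpha_act, Ha.
  - apply rst_step. right. apply Hstep, Hb.
  - apply rst_refl.
  - apply rst_sym, IH.
  - apply rst_trans with (f Q); assumption.
Qed.

Lemma beta_fv {M N : tm} : beta_step M N -> incl (fv N) (fv M).
Proof.
  induction 1 as [? ? [x A M N] | x A M M' _ IH | x A M M' _ IH
                 | x A A' M _ IH | x A A' M _ IH | M N P _ IH | M N P _ IH];
    intros a; simpl; rewrite ?in_app_iff, ?in_remove_var.
  2-7: pose proof (IH a); tauto.
  unfold subst1. rewrite fv_act, in_fv_img. intros [w [Hw Ha]].
  destruct (veq_dec V w x) as [->|Hwx].
  - rewrite upd_eq in Ha. tauto.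
  - rewrite upd_neq in Ha by exact Hwx. destruct Ha as [<-|[]]. tauto.
Qed.

Lemma lam_rename_nf (M : tm) s x y y' A :
  ~ In y (fv_img s (rem (fv M) x)) -> ~ In y' (fv_img s (rem (fv M) x)) ->
  act (tlam y A (act M (upd s x (tv y)))) ι = act (tlam y' A (act M (upd s x (tv y')))) ι.
Proof.
  intros Hy Hy'. simpl. rewrite !fv_act, !remove_var_fv_img_upd by assumption.
  f_equal. rewrite !act_upd_fresh by assumption. reflexivity.
Qed.

Lemma pi_rename_nf (M : tm) s x y y' A :
  ~ In y (fv_img s (rem (fv M) x)) -> ~ In y' (fv_img s (rem (fv M) x)) ->
  act (tpi y A (act M (upd s x (tv y)))) ι = act (tpi y' A (act M (upd s x (tv y')))) ι.
Proof.
  intros Hy Hy'. simpl. rewrite !fv_act, !remove_var_fv_img_upd by assumption.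
  f_equal. rewrite !act_upd_fresh by assumption. reflexivity.
Qed.

Lemma beta_conv_lam_body y (A P Q : tm) :
  beta_conv P Q -> beta_conv (tlam y A P) (tlam y A Q).
Proof.
  apply (beta_conv_congr (tlam y A)); [|intros ? ? ?; apply bs_lam_body; assumption].
  intros P' Q' H. simpl. rewrite (nf_eq_fv H), (nf_eq_act H). reflexivity.
Qed.

Lemma beta_conv_pi_body y (A P Q : tm) :
  beta_conv P Q -> beta_conv (tpi y A P) (tpi y A Q).
Proof.
  apply (beta_conv_congr (tpi y A)); [|intros ? ? ?; apply bs_pi_body; assumption].
  intros P' Q' H. simpl. rewrite (nf_eq_fv H), (nf_eq_act H). reflexivity.
Qed.

Lemma beta_conv_lam_dom y (A A' M : tm) :
  beta_conv A A' -> beta_conv (tlam y A M) (tlam y A' M).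
Proof.
  apply (beta_conv_congr (fun P => tlam y P M)); [|intros ? ? ?; apply bs_lam_dom; assumption].
  intros P Q H. simpl. rewrite H. reflexivity.
Qed.

Lemma beta_conv_pi_dom y (A A' M : tm) :
  beta_conv A A' -> beta_conv (tpi y A M) (tpi y A' M).
Proof.
  apply (beta_conv_congr (fun P => tpi y P M)); [|intros ? ? ?; apply bs_pi_dom; assumption].
  intros P Q H. simpl. rewrite H. reflexivity.
Qed.

Lemma beta_conv_appl (M N P : tm) : beta_conv M N -> beta_conv (tapp M P) (tapp N P).
Proof.
  apply (beta_conv_congr (fun Q => tapp Q P)); [|intros ? ? ?; apply bs_appl; assumption].
  intros Q Q' H. simpl. rewrite H. reflexivity.
Qed.

Lemma beta_conv_appr (M N P : tm) : beta_conv M N -> beta_conv (tapp P M) (tapp P N).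
Proof.
  apply (beta_conv_congr (tapp P)); [|intros ? ? ?; apply bs_appr; assumption].
  intros Q Q' H. simpl. rewrite H. reflexivity.
Qed.

Lemma X_fresh_beta (M M' : tm) s x :
  beta_step M M' -> ~ In (X s (rem (fv M) x)) (fv_img s (rem (fv M') x)).
Proof.
  intros HM Hin. apply (X_fresh s (rem (fv M) x)).
  apply in_fv_img in Hin as [w [Hw Ha]]. apply in_fv_img. exists w.
  rewrite in_remove_var in *. split; [split; [apply (beta_fv HM)|]|]; tauto.
Qed.

Lemma beta_act {M N : tm} : beta_step M N -> forall s, beta_conv (act M s) (act N s).
Proof.
  induction 1 as [? ? [x A M N] | x A M M' HM IH | x A M M' HM IH
                 | x A A' M _ IH | x A A' M _ IH | M N P _ IH | M N P _ IH];
    intros s; simpl.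
  - set (y := X s (rem (fv M) x)). pose proof (X_fresh s (rem (fv M) x)) as Hy.
    unfold beta_conv. apply rst_trans with (subst1 (act M (upd s x (tv y))) y (act N s)).
    { apply rst_step. right. do 2 constructor. }
    apply beta_conv_of_nf. unfold subst1 at 1.
    rewrite act_upd_fresh by exact Hy. unfold subst1. rewrite !act_act.
    apply act_ext. intros w _. unfold scomp, upd.
    destruct (veq_dec V w x); [rewrite act_act; reflexivity | simpl; apply act_iota_act].
  - set (y := X s (rem (fv M) x)). unfold beta_conv.
    apply rst_trans with (tlam y (act A s) (act M' (upd s x (tv y)))).
    + apply beta_conv_lam_body, IH.
    + apply beta_conv_of_nf, lam_rename_nf; [apply X_fresh_beta, HM | apply X_fresh].
  - set (y := X s (rem (fv M) x)). unfold beta_conv.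
    apply rst_trans with (tpi y (act A s) (act M' (upd s x (tv y)))).
    + apply beta_conv_pi_body, IH.
    + apply beta_conv_of_nf, pi_rename_nf; [apply X_fresh_beta, HM | apply X_fresh].
  - apply beta_conv_lam_dom, IH.
  - apply beta_conv_pi_dom, IH.
  - apply beta_conv_appl, IH.
  - apply beta_conv_appr, IH.
Qed.

Lemma conv_act {M N : tm} : beta_conv M N -> forall s, beta_conv (act M s) (act N s).
Proof.
  intros H s. unfold beta_conv in H.
  induction H as [M N [Ha|Hb] | M | M N _ IH | M N P _ IH1 _ IH2].
  - rewrite (alpha_act Ha). apply rst_refl.
  - apply beta_act, Hb.
  - apply rst_refl.
  - apply rst_sym, IH.
  - apply rst_trans with (act N s); assumption.
Qed.

Lemma fv_subst1_var (B : tm) x z a : In a (rem (fv B) x) -> In a (fv (subst1 B x (tv z))).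
Proof.
  rewrite in_remove_var. intros [Ha Hax]. unfold subst1. rewrite fv_act, in_fv_img.
  exists a. rewrite upd_neq by exact Hax. split; [exact Ha | left; reflexivity].
Qed.

Lemma remove_var_fv_incl (B : tm) x l :
  (forall z, ~ In z l -> incl (fv (subst1 B x (tv z))) (z :: l)) -> incl (rem (fv B) x) l.
Proof.
  intros H a Ha. pose proof (X'_fresh (l ++ fv B)) as Hz. rewrite in_app_iff in Hz.
  destruct (H (X' V (l ++ fv B)) ltac:(tauto) a (fv_subst1_var _ _ _ _ Ha)) as [<-|Hl].
  - apply in_remove_var in Ha. tauto.
  - exact Hl.
Qed.

Definition ren (r : V -> V) : V -> tm := fun w => tv (r w).

Definition rename_ctx (r : V -> V) (G : context V C) : context V C :=
  map (fun p => (r (fst p), act (snd p) (ren r))) G.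

Lemma dom_rename_ctx r G : dom (rename_ctx r G) = map r (dom G).
Proof. unfold dom, rename_ctx. rewrite !map_map. reflexivity. Qed.

Lemma act_ren_nf (M : tm) r : act (act M (ren r)) ι = act M (ren r).
Proof. rewrite act_act. reflexivity. Qed.

End Substitution.

(** * Weakening and free variables *)

Scheme typing_mutind := Minimality for typing Sort Prop
  with wf_mutind := Minimality for wf Sort Prop.

Section Typing.
Context {V : VarType} {C : Type} {Ax : C -> C -> Prop} {Rl : C -> C -> C -> Prop}.
Local Notation tm := (term V C).
Local Notation ty := (typing Ax Rl).

Lemma typing_wf {G} {M B : tm} : ty G M B -> wf Ax Rl G.
Proof. induction 1; assumption. Qed.

Lemma in_dom (G : context V C) a T : In (a, T) G -> In a (dom G).
Proof. apply (in_map fst G (a, T)). Qed.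

Lemma weakening {G} {M B : tm} : ty G M B -> forall D, incl G D -> wf Ax Rl D -> ty D M B.
Proof.
  induction 1 as [G s1 s2 _ Hax | G x A _ Hin | G x A B s1 s2 s3 HR _ IHA _ IHB
                 | G x y A M B s1 s2 s3 HR _ IHA _ IHB _ IHM | G M N x A B s _ IHM _ IHN _ IHB
                 | G M A B s _ IHM Hc _ IHB];
    intros D HGD HD.
  3,4: assert (Hext : forall z, ~ In z (dom D) ->
               ~ In z (dom G) /\ incl ((z, A) :: G) ((z, A) :: D) /\ wf Ax Rl ((z, A) :: D))
         by (intros z Hz; split; [intros Hin; apply Hz, (incl_map fst HGD), Hin|];
             split; [apply incl_cons; [left; reflexivity | apply incl_tl, HGD]
                    | apply wf_cons with s1; auto]).
  - apply ty_sort; assumption.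
  - apply ty_var; auto.
  - apply ty_prod with (s1 := s1) (s2 := s2); [exact HR | auto |].
    intros z Hz. destruct (Hext z Hz) as (? & ? & ?). auto.
  - apply ty_abs with (s1 := s1) (s2 := s2) (s3 := s3); [exact HR | auto | |];
      intros z Hz; destruct (Hext z Hz) as (? & ? & ?); auto.
  - eapply ty_app; eauto.
  - eapply ty_conv; eauto.
Qed.

Lemma typing_fv_subject {G} {M B : tm} : ty G M B -> incl (fv M) (dom G).
Proof.
  induction 1 as [G s1 s2 _ Hax | G x A _ Hin | G x A B s1 s2 s3 HR _ IHA _ IHB
                 | G x y A M B s1 s2 s3 HR _ IHA _ IHB _ IHM | G M N x A B s _ IHM _ IHN _ IHB
                 | G M A B s _ IHM Hc _ IHB];
    simpl; try (apply incl_app); try assumption.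
  - intros a [].
  - intros a [<-|[]]. apply (in_dom _ _ _ Hin).
  - apply remove_var_fv_incl. exact IHB.
  - apply remove_var_fv_incl. exact IHM.
Qed.

Lemma wf_fv {G} : wf Ax Rl G -> forall a (T : tm), In (a, T) G -> incl (fv T) (dom G).
Proof.
  induction 1 as [|G x A s _ IH HA Hx]; intros a T Hin; [destruct Hin|].
  apply incl_tl. destruct Hin as [E|E].
  - injection E as <- <-. apply (typing_fv_subject HA).
  - apply (IH a T E).
Qed.

Lemma typing_fv_type {G} {M B : tm} : ty G M B -> incl (fv B) (dom G).
Proof.
  induction 1 as [G s1 s2 HG Hax | G x A HG Hin | G x A B s1 s2 s3 HR HA _ HB _
                 | G x y A M B s1 s2 s3 HR HA _ HB _ _ _ | G M N x A B s _ _ _ _ HB _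
                 | G M A B s _ _ Hc HB _].
  - intros a [].
  - apply (wf_fv HG _ _ Hin).
  - intros a [].
  - apply (typing_fv_subject (ty_prod y B s3 HR HA HB)).
  - apply (typing_fv_subject HB).
  - apply (typing_fv_subject HB).
Qed.

End Typing.

(** * Invariance of typing under alpha-conversion *)

Section AlphaInvariance.
Context {V : VarType} {C : Type} {Ax : C -> C -> Prop} {Rl : C -> C -> C -> Prop}.
Local Notation tm := (term V C).
Local Notation ι := (iota V C).
Local Notation ty := (typing Ax Rl).

Definition ctx_nf_eq (G G' : context V C) : Prop :=
  Forall2 (fun p p' => fst p' = fst p /\ act (snd p') ι = act (snd p) ι) G G'.

Lemma dom_ctx_nf_eq {G G'} : ctx_nf_eq G G' -> dom G' = dom G.
Proof.
  induction 1 as [|p p' G G' [E _] _ IH]; [reflexivity|].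
  simpl. f_equal; [exact E | exact IH].
Qed.

Lemma in_ctx_nf_eq {G G'} : ctx_nf_eq G G' ->
  forall a (T : tm), In (a, T) G -> exists T', In (a, T') G' /\ act T' ι = act T ι.
Proof.
  induction 1 as [|[b U] [b' U'] G G' [E HU] _ IH]; intros a T Hin; [destruct Hin|].
  simpl in E, HU. destruct Hin as [Eq|Hin].
  - injection Eq as <- <-. exists U'. split; [left; rewrite E; reflexivity | exact HU].
  - destruct (IH a T Hin) as [T' [HT' HTT']]. exists T'. split; [right; exact HT' | exact HTT'].
Qed.

Lemma ctx_nf_eq_cons {G G'} z (A A' : tm) :
  ctx_nf_eq G G' -> act A' ι = act A ι -> ctx_nf_eq ((z, A) :: G) ((z, A') :: G').
Proof. intros HG HA. constructor; [split; [reflexivity | exact HA] | exact HG]. Qed.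

Lemma ctx_nf_eq_rename_fixed (r : V -> V) (G : context V C) :
  (forall a T, In (a, T) G -> r a = a /\ act T (ren r) = act T ι) ->
  ctx_nf_eq (rename_ctx r G) G.
Proof.
  induction G as [|[a T] G IH]; intros H; constructor.
  - destruct (H a T (or_introl eq_refl)) as [Ea ET].
    split; simpl; [symmetry; exact Ea|]. rewrite act_ren_nf. symmetry. exact ET.
  - apply IH. intros b U Hin. apply H. right. exact Hin.
Qed.

Theorem typing_nf_invariant {G} {M B : tm} :
  ty G M B -> forall G' M', ctx_nf_eq G G' -> act M' ι = act M ι -> ty G' M' B.
Proof.
  revert G M B.
  apply (typing_mutind V C Ax Rl
           (fun G M B => forall G' M', ctx_nf_eq G G' -> act M' ι = act M ι -> ty G' M' B)
           (fun G => forall G', ctx_nf_eq G G' ->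
                     wf Ax Rl G' /\ forall a T, In (a, T) G -> exists s, ty G' T (tc s))).
  - intros G s1 s2 _ IHG Hax G' M' HGG' HM.
    rewrite (nf_eq_sort _ _ HM). apply ty_sort; [apply (IHG G' HGG') | exact Hax].
  - intros G x T _ IHG Hin G' M' HGG' HM.
    rewrite (nf_eq_var _ _ HM). destruct (IHG G' HGG') as [HwG' Htyped].
    destruct (in_ctx_nf_eq HGG' _ _ Hin) as [T' [Hin' HT']].
    destruct (Htyped x T Hin) as [s Hs].
    apply ty_conv with (A := T') (s := s);
      [apply ty_var; assumption | apply beta_conv_of_nf, HT' | exact Hs].
  - intros G x A B s1 s2 s3 HR _ IHA _ IHB G' M' HGG' HM.
    destruct M' as [k|v|u A' B'|u A' B'|M1 N1]; simpl in HM; try discriminate.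
    injection HM as Hu HA' HB'.
    apply ty_prod with (s1 := s1) (s2 := s2); [exact HR | apply IHA; assumption |].
    intros z Hz. rewrite (dom_ctx_nf_eq HGG') in Hz.
    apply (IHB z); [exact Hz | apply ctx_nf_eq_cons; assumption | apply binder_body_nf; assumption].
  - intros G x y A M B s1 s2 s3 HR _ IHA _ IHB _ IHM G' M' HGG' HM.
    destruct M' as [k|v|u A' M1|u A' M1|M1 N1]; simpl in HM; try discriminate.
    injection HM as Hu HA' HM1.
    assert (Hbody : forall A0, act A0 ι = act A ι -> forall z, ~ In z (dom G') ->
                      ty ((z, A0) :: G') (subst1 B y (tv z)) (tc s2)).
    { intros A0 HA0 z Hz. rewrite (dom_ctx_nf_eq HGG') in Hz.
      apply (IHB z); [exact Hz | apply ctx_nf_eq_cons; assumption | reflexivity]. }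
    (* (abs) only types [tlam u A' M1] at a product whose domain is [A'] itself. *)
    apply ty_conv with (A := tpi y A' B) (s := s3).
    + apply ty_abs with (s1 := s1) (s2 := s2) (s3 := s3);
        [exact HR | apply IHA; assumption | apply Hbody, HA' |].
      intros z Hz. rewrite (dom_ctx_nf_eq HGG') in Hz.
      apply (IHM z);
        [exact Hz | apply ctx_nf_eq_cons; assumption | apply binder_body_nf; assumption].
    + apply beta_conv_of_nf. simpl. rewrite HA'. reflexivity.
    + apply ty_prod with (s1 := s1) (s2 := s2); [exact HR | apply IHA | apply Hbody];
        solve [assumption | reflexivity].
  - intros G M N x A B s _ IHM _ IHN _ IHB G' M' HGG' HM.
    destruct M' as [k|v|u A' M1|u A' M1|M1 N1]; simpl in HM; try discriminate.
    injection HM as HM1 HN1.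
    assert (HBN : act (subst1 B x N1) ι = act (subst1 B x N) ι)
      by apply (nf_eq_subst1 _ _ _ _ HN1).
    apply ty_conv with (A := subst1 B x N1) (s := s).
    + apply (ty_app (A := A) (s := s)); [apply IHM | apply IHN | apply IHB]; assumption.
    + apply beta_conv_of_nf, HBN.
    + apply IHB; [assumption | reflexivity].
  - intros G M A B s _ IHM Hc _ IHB G' M' HGG' HM.
    apply ty_conv with (A := A) (s := s); [apply IHM; assumption | exact Hc |].
    apply IHB; [assumption | reflexivity].
  - intros G' HG'. inversion HG'. split; [constructor | intros a T []].
  - intros G x A s _ IHG _ IHA Hx G' HGG'.
    inversion HGG' as [|? [x' A'] ? G'' [Ex HA'] HG'']; subst. simpl in Ex, HA'. subst x'.
    destruct (IHG G'' HG'') as [HwG'' Htyped].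
    assert (HwG' : wf Ax Rl ((x, A') :: G'')).
    { apply wf_cons with (s := s); [exact HwG'' | apply IHA; assumption |].
      rewrite (dom_ctx_nf_eq HG''). exact Hx. }
    split; [exact HwG'|]. intros a T [E|Hin].
    + injection E as <- <-. exists s.
      apply (weakening (G := G'')); [apply IHA; [assumption | reflexivity] | ..].
      * apply incl_tl, incl_refl.
      * exact HwG'.
    + destruct (Htyped a T Hin) as [s' Hs']. exists s'.
      apply (weakening Hs'); [apply incl_tl, incl_refl | exact HwG'].
Qed.

End AlphaInvariance.

(** * Renaming *)

Section Renaming.
Context {V : VarType} {C : Type} {Ax : C -> C -> Prop} {Rl : C -> C -> C -> Prop}.
Context {r ri : V -> V}.
Hypothesis r_ri : forall v, r (ri v) = v.
Hypothesis ri_r : forall v, ri (r v) = v.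
Local Notation tm := (term V C).
Local Notation ι := (iota V C).
Local Notation rem := (remove_var V).
Local Notation ty := (typing Ax Rl).
Local Notation ρ := (@ren V C r).

Lemma act_subst1_ren (B N : tm) x :
  act (subst1 B x N) ρ
  = subst1 (act B (upd ρ x (tv (X ρ (rem (fv B) x))))) (X ρ (rem (fv B) x))
           (act N ρ).
Proof.
  unfold subst1 at 2. rewrite act_upd_fresh by apply X_fresh.
  unfold subst1. rewrite act_act. apply act_ext. intros w _.
  unfold scomp, upd. destruct (veq_dec V w x); reflexivity.
Qed.

Lemma rename_body (B : tm) x z :
  subst1 (act B (upd ρ x (tv (X ρ (rem (fv B) x))))) (X ρ (rem (fv B) x)) (tv z)
  = act (subst1 B x (tv (ri z))) ρ.
Proof.
  rewrite act_subst1_ren. change (act (tv (ri z)) ρ) with (@tv V C (r (ri z))).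
  rewrite r_ri. reflexivity.
Qed.

Lemma rename_ctx_fresh_cons z (A : tm) G :
  rename_ctx r ((ri z, A) :: G) = (z, act A ρ) :: rename_ctx r G.
Proof. simpl. rewrite r_ri. reflexivity. Qed.

Lemma notin_dom_rename_ctx z (G : context V C) :
  ~ In z (dom (rename_ctx r G)) -> ~ In (ri z) (dom G).
Proof.
  rewrite dom_rename_ctx. intros Hz Hin. apply Hz. rewrite <- (r_ri z). apply in_map, Hin.
Qed.

Theorem typing_rename {G} {M B : tm} :
  ty G M B -> ty (rename_ctx r G) (act M ρ) (act B ρ).
Proof.
  revert G M B.
  apply (typing_mutind V C Ax Rl
           (fun G M B => ty (rename_ctx r G) (act M ρ) (act B ρ))
           (fun G => wf Ax Rl (rename_ctx r G))).
  - intros G s1 s2 _ HG Hax. apply ty_sort; assumption.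
  - intros G x A _ HG Hin. apply ty_var; [exact HG|].
    apply (in_map (fun p => (r (fst p), act (snd p) ρ)) G (x, A) Hin).
  - intros G x A B s1 s2 s3 HR _ IHA _ IHB.
    apply ty_prod with (s1 := s1) (s2 := s2); [exact HR | exact IHA |].
    intros z Hz. rewrite rename_body, <- rename_ctx_fresh_cons.
    apply IHB, notin_dom_rename_ctx, Hz.
  - intros G x y A M B s1 s2 s3 HR _ IHA _ IHB _ IHM.
    apply ty_abs with (s1 := s1) (s2 := s2) (s3 := s3); [exact HR | exact IHA | |];
      intros z Hz; rewrite !rename_body, <- rename_ctx_fresh_cons;
      [apply IHB | apply IHM]; apply notin_dom_rename_ctx, Hz.
  - intros G M N x A B s _ IHM _ IHN _ IHB.
    rewrite act_subst1_ren in IHB |- *. eapply ty_app; [exact IHM | exact IHN | exact IHB].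
  - intros G M A B s _ IHM Hc _ IHB.
    apply ty_conv with (A := act A ρ) (s := s); [exact IHM | apply conv_act, Hc | exact IHB].
  - constructor.
  - intros G x A s _ HG _ IHA Hx. apply wf_cons with (s := s); [exact HG | exact IHA |].
    intros Hin. change (In (r x) (dom (rename_ctx r G))) in Hin.
    rewrite dom_rename_ctx in Hin. apply in_map_iff in Hin as [w [Ew Hw]].
    apply Hx. rewrite <- (ri_r x), <- Ew, ri_r. exact Hw.
Qed.

End Renaming.

Section Swap.
Context {V : VarType} {C : Type}.
Local Notation tm := (term V C).
Local Notation ι := (iota V C).

Definition swap (x y v : V) : V :=
  if veq_dec V v x then y else if veq_dec V v y then x else v.

Lemma swap_involutive x y v : swap x y (swap x y v) = v.
Proof. unfold swap. repeat (destruct veq_dec; subst); congruence. Qed.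

Lemma swap_l x y : swap x y x = y.
Proof. unfold swap. destruct (veq_dec V x x); congruence. Qed.

Lemma swap_other x y v : v <> x -> v <> y -> swap x y v = v.
Proof. unfold swap. repeat destruct veq_dec; congruence. Qed.

Lemma act_swap_fixed (T : tm) x y l :
  ~ In x l -> ~ In y l -> incl (fv T) l -> act T (ren (swap x y)) = act T ι.
Proof.
  intros Hx Hy Hfv. apply act_ext. intros w Hw. unfold ren.
  rewrite swap_other; [reflexivity | |]; intros ->; auto.
Qed.

Lemma act_swap_subst1 (T : tm) x y l :
  ~ In x l -> ~ In y l -> incl (fv T) (x :: l) -> act T (ren (swap x y)) = subst1 T x (tv y).
Proof.
  intros Hx Hy Hfv. apply act_ext. intros w Hw. unfold ren.
  destruct (Hfv w Hw) as [<-|Hl].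
  - rewrite swap_l, upd_eq. reflexivity.
  - rewrite swap_other, upd_neq; [reflexivity | ..]; intros ->; auto.
Qed.

End Swap.

Theorem mainTheorem18 (V : VarType) (C : Type)
  (Ax : C -> C -> Prop) (Rl : C -> C -> C -> Prop)
  (G : context V C) (x y : V) (A M B : term V C) :
  ~ In y (dom G) ->
  typing Ax Rl ((x, A) :: G) M B ->
  typing Ax Rl ((y, A) :: G) (subst1 M x (tv y)) (subst1 B x (tv y)).
Proof.
  intros Hy HT.
  pose proof (typing_wf HT) as Hwf. inversion Hwf as [|? ? ? s HwG HA Hx]; subst.
  pose proof (typing_rename (swap_involutive x y) (swap_involutive x y) HT) as HR.
  rewrite <- (act_swap_subst1 B x y (dom G) Hx Hy (typing_fv_type HT)).
  apply (typing_nf_invariant HR).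
  - constructor.
    + split; simpl; [symmetry; apply swap_l|]. rewrite act_ren_nf.
      symmetry. exact (act_swap_fixed A x y (dom G) Hx Hy (typing_fv_subject HA)).
    + apply ctx_nf_eq_rename_fixed. intros a T Hin. pose proof (in_dom G a T Hin) as Ha.
      split; [apply swap_other; intros ->; contradiction|].
      exact (act_swap_fixed T x y (dom G) Hx Hy (wf_fv HwG a T Hin)).
  - rewrite subst1_var_nf, act_ren_nf.
    symmetry. exact (act_swap_subst1 M x y (dom G) Hx Hy (typing_fv_subject HT)).
Qed.
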